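(* Let $\mathbb{C}$ be a cartesian monoidal category and $T$ an observational commutative monad on $\mathbb{C}$ such that for every object $Y$ the pair $\eta_{TY},T\eta_Y:TY\to TTY$ has an equalizer $\theta_Y:DY\to TY$. Then for all objects $X,Y$, composition with $\theta_Y$ gives a bijection between morphisms $X\to DY$ in $\mathbb{C}$ and deterministic Kleisli morphisms $X\rightsquigarrow Y$ of $\mathsf{Kl}(T)$ (i.e. $f:X\rightsquigarrow Y$ is deterministic iff $f^\sharp$ factors, necessarily uniquely, through $\theta_Y$); thus the submonad $D$ of $T$ has as Kleisli morphisms exactly the deterministic morphisms of $\mathsf{Kl}(T)$.
   Context: $\mathbb{C}$ has finite products; $T=(T,\eta,\mu)$ is a commutative monad with monoidal structure $\nabla_{A,B}:TA\times TB\to T(A\times B)$. $\mathsf{Kl}(T)$: morphisms $f:A\rightsquigarrow B$ correspond to $f^\sharp:A\to TB$, composition $(g\circledcirc f)^\sharp=\mu\circ T(g^\sharp)\circ f^\sharp$, identities $\eta$; tensor $\otimes$ is $\times$ on objects and $(f\otimes g)^\sharp=\nabla\circ(f^\sharp\times g^\sharp)$. $\mathsf{copy}_X^\sharp=\eta\circ\Delta_X$, $\mathsf{del}_X^\sharp=\eta\circ !_X$. A Kleisli morphism $f:X\rightsquigarrow Y$ is deterministic if $\mathsf{copy}_Y\circledcirc f=(f\otimes f)\circledcirc\mathsf{copy}_X$ and $\mathsf{del}_Y\circledcirc f=\mathsf{del}_X$. $\mathsf{force}_A:TA\rightsquigarrow A$ has $\mathsf{force}_A^\sharp=1_{TA}$;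 $\mathsf{copy}_n:TX\rightsquigarrow(TX)^{\otimes n}$ has $\mathsf{copy}_n^\sharp=\eta\circ\Delta_n$ with $\Delta_n$ the $n$-fold diagonal; $\mathsf{samp}_n=\mathsf{force}^{\otimes n}\circledcirc\mathsf{copy}_n:TX\rightsquigarrow X^{\otimes n}$. $T$ is observational if for every $X$ the family $(\mathsf{samp}_n)_{n\in\mathbb{N}}$ is jointly monic in $\mathsf{Kl}(T)$. The object $D Y$ becomes a monad $D$ (a submonad of $T$ via $\theta$): for $g:Y\to Z$... more precisely, its unit $e_X:X\to DX$ is the unique map with $\theta_X\circ e_X=\eta_X$, and its Kleisli morphisms $X\to DY$ are identified, via $h\mapsto(\theta_Y\circ h)^\flat$, with Kleisli morphisms of $T$. *)

Set Implicit Arguments.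
Unset Strict Implicit.
Set Universe Polymorphism.

Record Category := {
  obj :> Type;
  hom : obj -> obj -> Type;
  idm : forall A, hom A A;
  comp : forall A B C, hom B C -> hom A B -> hom A C;
  comp_id_l : forall A B (f : hom A B), comp (idm B) f = f;
  comp_id_r : forall A B (f : hom A B), comp f (idm A) = f;
  comp_assoc : forall A B C D (h : hom C D) (g : hom B C) (f : hom A B),
      comp h (comp g f) = comp (comp h g) f
}.
Arguments idm {_} _.
Arguments comp {_ _ _ _} _ _.
Notation "g \o' f" := (comp g f) (at level 40, left associativity).

Record Cartesian (C : Category) := {
  one : C;
  bang : forall A : C, hom A one;
  bang_unique : forall (A : C) (f : hom A one), f = bang A;
  prod : C -> C -> C;
  p1 : forall A B : C, hom (prod A B) A;
  p2 : forall A B : C, hom (prod A B) B;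
  pair : forall (Z A B : C), hom Z A -> hom Z B -> hom Z (prod A B);
  pair_p1 : forall Z A B (f : hom Z A) (g : hom Z B), p1 A B \o' pair f g = f;
  pair_p2 : forall Z A B (f : hom Z A) (g : hom Z B), p2 A B \o' pair f g = g;
  pair_unique : forall Z A B (f : hom Z A) (g : hom Z B) (h : hom Z (prod A B)),
      p1 A B \o' h = f -> p2 A B \o' h = g -> h = pair f g
}.
Arguments one {_} _.
Arguments bang {_} _ _.
Arguments prod {_} _ _ _.
Arguments p1 {_} _ _ _.
Arguments p2 {_} _ _ _.
Arguments pair {_} _ {_ _ _} _ _.

Section Products.
Context {C : Category} (P : Cartesian C).
Definition pmap {A A' B B' : C} (f : hom A A') (g : hom B B')
  : hom (prod P A B) (prod P A' B') :=
  pair P (f \o' p1 P A B) (g \o' p2 P A B).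
Definition swap (A B : C) : hom (prod P A B) (prod P B A) :=
  pair P (p2 P A B) (p1 P A B).
Definition assoc (A B D : C) : hom (prod P (prod P A B) D) (prod P A (prod P B D)) :=
  pair P (p1 P A B \o' p1 P (prod P A B) D)
         (pair P (p2 P A B \o' p1 P (prod P A B) D) (p2 P (prod P A B) D)).
Definition diag (A : C) : hom A (prod P A A) := pair P (idm A) (idm A).
End Products.

(* ---------- Commutative monads, presented as symmetric monoidal monads
   (monoidal structure nabla_{A,B} : TA x TB -> T(A x B)) ---------- *)
Record CommMonad (C : Category) (P : Cartesian C) := {
  T : C -> C;
  Tmap : forall A B : C, hom A B -> hom (T A) (T B);
  Tmap_id : forall A, Tmap (idm A) = idm (T A);
  Tmap_comp : forall A B D (g : hom B D) (f : hom A B),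
      Tmap (g \o' f) = Tmap g \o' Tmap f;
  eta : forall A : C, hom A (T A);
  mu : forall A : C, hom (T (T A)) (T A);
  eta_nat : forall A B (f : hom A B), Tmap f \o' eta A = eta B \o' f;
  mu_nat : forall A B (f : hom A B), Tmap f \o' mu A = mu B \o' Tmap (Tmap f);
  mu_eta_l : forall A, mu A \o' eta (T A) = idm (T A);
  mu_eta_r : forall A, mu A \o' Tmap (eta A) = idm (T A);
  mu_assoc : forall A, mu A \o' Tmap (mu A) = mu A \o' mu (T A);
  nabla : forall A B : C, hom (prod P (T A) (T B)) (T (prod P A B));
  nabla_nat : forall A A' B B' (f : hom A A') (g : hom B B'),
      nabla A' B' \o' pmap P (Tmap f) (Tmap g) = Tmap (pmap P f g) \o' nabla A B;
  nabla_unit_l : forall B,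
      Tmap (p2 P (one P) B) \o' nabla (one P) B \o' pmap P (eta (one P)) (idm (T B))
      = p2 P (one P) (T B);
  nabla_unit_r : forall A,
      Tmap (p1 P A (one P)) \o' nabla A (one P) \o' pmap P (idm (T A)) (eta (one P))
      = p1 P (T A) (one P);
  nabla_assoc : forall A B D,
      Tmap (assoc P A B D) \o' nabla (prod P A B) D \o' pmap P (nabla A B) (idm (T D))
      = nabla A (prod P B D) \o' pmap P (idm (T A)) (nabla B D)
          \o' assoc P (T A) (T B) (T D);
  nabla_eta : forall A B, nabla A B \o' pmap P (eta A) (eta B) = eta (prod P A B);
  nabla_mu : forall A B,
      nabla A B \o' pmap P (mu A) (mu B)
      = mu (prod P A B) \o' Tmap (nabla A B) \o' nabla (T A) (T B);
  nabla_sym : forall A B,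
      Tmap (swap P A B) \o' nabla A B = nabla B A \o' swap P (T A) (T B)
}.
Arguments T {_ _} _ _.
Arguments Tmap {_ _} _ {_ _} _.
Arguments eta {_ _} _ _.
Arguments mu {_ _} _ _.
Arguments nabla {_ _} _ _ _.

(* ---------- Kleisli category Kl(T): a morphism f : A ~> B is represented
   by f# : A -> T B ---------- *)
Section Kleisli.
Context {C : Category} {P : Cartesian C} (M : CommMonad P).

Definition kcomp {A B D : C} (g : hom B (T M D)) (f : hom A (T M B))
  : hom A (T M D) := mu M D \o' Tmap M g \o' f.
Definition kid (A : C) : hom A (T M A) := eta M A.
Definition ktensor {A A' B B' : C} (f : hom A (T M A')) (g : hom B (T M B'))
  : hom (prod P A B) (T M (prod P A' B')) := nabla M A' B' \o' pmap P f g.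
Definition kcopy (A : C) : hom A (T M (prod P A A)) := eta M _ \o' diag P A.
Definition kdel (A : C) : hom A (T M (one P)) := eta M _ \o' bang P A.

Definition deterministic {X Y : C} (f : hom X (T M Y)) : Prop :=
  kcomp (kcopy Y) f = kcomp (ktensor f f) (kcopy X) /\
  kcomp (kdel Y) f = kdel X.

Fixpoint pw (X : C) (n : nat) : C :=
  match n with O => one P | S k => prod P X (pw X k) end.
Fixpoint diagn (X : C) (n : nat) : hom X (pw X n) :=
  match n with O => bang P X | S k => pair P (idm X) (diagn X k) end.
Fixpoint ktpow {A B : C} (f : hom A (T M B)) (n : nat) : hom (pw A n) (T M (pw B n)) :=
  match n with O => kid (one P) | S k => ktensor f (ktpow f k) end.

Definition force (A : C) : hom (T M A) (T M A) := idm (T M A).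
Definition copyn (X : C) (n : nat) : hom (T M X) (T M (pw (T M X) n)) :=
  eta M _ \o' diagn (T M X) n.
Definition samp (X : C) (n : nat) : hom (T M X) (T M (pw X n)) :=
  kcomp (ktpow (force X) n) (copyn X n).

Definition observational : Prop :=
  forall (X A : C) (g h : hom A (T M (T M X))),
    (forall n : nat, kcomp (samp X n) g = kcomp (samp X n) h) -> g = h.
End Kleisli.

Definition is_equalizer {C : Category} {E A B : C} (e : hom E A) (f g : hom A B) : Prop :=
  f \o' e = g \o' e /\
  forall (Z : C) (k : hom Z A), f \o' k = g \o' k ->
    exists h : hom Z E, e \o' h = k /\ forall h' : hom Z E, e \o' h' = k -> h' = h.

(* A Kleisli morphism f : X ~> Y factors through the equalizer theta_Y exactly
   when it is thunkable, i.e. eta_{TY} o f# = T(eta_Y) o f#.  A thunkable f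
   satisfies g o f# = (g o eta_Y) (Kleisli composed with) f for every
   g : TY -> TZ, and with g = nabla o diag resp. eta o ! this is the copy
   resp. deletion law, so thunkable morphisms are deterministic.  Conversely,
   sampling a deterministic f n times gives T(Delta_n) o f#, and so does
   sampling T(eta_Y) o f#; since the samplings are jointly monic, f is
   thunkable. *)

Section Equalizers.
Context {C : Category} {E A B : C} {e : hom E A} {f g : hom A B}.
Hypothesis e_equalizer : is_equalizer e f g.

Lemma equalizer_mono {Z : C} (h1 h2 : hom Z E) : e \o' h1 = e \o' h2 -> h1 = h2.
Proof.
  intros Eh. destruct e_equalizer as [fe_ge univ].
  assert (Hk : f \o' (e \o' h2) = g \o' (e \o' h2)).
  { rewrite !comp_assoc, fe_ge. reflexivity. }
  destruct (univ Z _ Hk) as [h [_ h_unique]].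
  rewrite (h_unique h1 Eh), (h_unique h2 eq_refl). reflexivity.
Qed.

Lemma equalizer_factorsP {Z : C} (k : hom Z A) :
  f \o' k = g \o' k <-> exists h : hom Z E, e \o' h = k.
Proof.
  destruct e_equalizer as [fe_ge univ]. split.
  - intros Hk. destruct (univ Z k Hk) as [h [Hh _]]. exists h. exact Hh.
  - intros [h <-]. rewrite !comp_assoc, fe_ge. reflexivity.
Qed.

End Equalizers.

Section Products.
Context {C : Category} (P : Cartesian C).

Lemma hom_one_eq {A : C} (f g : hom A (one P)) : f = g.
Proof. rewrite (bang_unique f), (bang_unique g). reflexivity. Qed.

Lemma pair_comp {Z Z' A B : C} (f : hom Z A) (g : hom Z B) (h : hom Z' Z) :
  pair P f g \o' h = pair P (f \o' h) (g \o' h).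
Proof.
  apply pair_unique; rewrite comp_assoc; [rewrite pair_p1 | rewrite pair_p2];
    reflexivity.
Qed.

Lemma pmap_pair {Z A A' B B' : C} (f : hom A A') (g : hom B B')
    (a : hom Z A) (b : hom Z B) :
  pmap P f g \o' pair P a b = pair P (f \o' a) (g \o' b).
Proof.
  unfold pmap. rewrite pair_comp, <- !comp_assoc, pair_p1, pair_p2. reflexivity.
Qed.

Lemma diag_comp {Z A : C} (h : hom Z A) : diag P A \o' h = pair P h h.
Proof. unfold diag. rewrite pair_comp, !comp_id_l. reflexivity. Qed.

End Products.

Section Kleisli.
Context {C : Category} {P : Cartesian C} (M : CommMonad P).

Definition thunkable {X Y : C} (f : hom X (T M Y)) : Prop :=
  eta M (T M Y) \o' f = Tmap M (eta M Y) \o' f.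

Lemma kcomp_eta_l {A B Z : C} (g : hom B Z) (f : hom A (T M B)) :
  kcomp (eta M Z \o' g) f = Tmap M g \o' f.
Proof.
  unfold kcomp. rewrite Tmap_comp, comp_assoc, mu_eta_r, comp_id_l. reflexivity.
Qed.

Lemma kcomp_eta_r {A B Z : C} (g : hom B (T M Z)) (h : hom A B) :
  kcomp g (eta M B \o' h) = g \o' h.
Proof.
  unfold kcomp. rewrite !comp_assoc, <- (comp_assoc (mu M Z)), eta_nat.
  rewrite comp_assoc, mu_eta_l, comp_id_l. reflexivity.
Qed.

Lemma kcomp_Tmap_r {A B B' Z : C} (g : hom B' (T M Z)) (h : hom B B')
    (f : hom A (T M B)) :
  kcomp g (Tmap M h \o' f) = kcomp (g \o' h) f.
Proof. unfold kcomp. rewrite Tmap_comp, !comp_assoc. reflexivity. Qed.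

Lemma deterministicE {X Y : C} (f : hom X (T M Y)) :
  deterministic f <->
  nabla M Y Y \o' pair P f f = Tmap M (diag P Y) \o' f /\
  Tmap M (bang P Y) \o' f = eta M (one P) \o' bang P X.
Proof.
  unfold deterministic, kcopy, kdel, ktensor.
  rewrite !kcomp_eta_l, kcomp_eta_r, <- comp_assoc.
  unfold diag. rewrite pmap_pair, !comp_id_r.
  split; intros [Hcopy Hdel]; split; auto.
Qed.

Lemma thunkable_comp {X Y Z : C} (f : hom X (T M Y)) (g : hom (T M Y) (T M Z)) :
  thunkable f -> g \o' f = kcomp (g \o' eta M Y) f.
Proof.
  intros Hf. rewrite <- kcomp_Tmap_r, <- Hf, kcomp_eta_r. reflexivity.
Qed.

Lemma thunkable_deterministic {X Y : C} (f : hom X (T M Y)) :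
  thunkable f -> deterministic f.
Proof.
  intros Hf. apply deterministicE. split.
  - assert (nabla_diag_eta :
      nabla M Y Y \o' diag P (T M Y) \o' eta M Y = eta M _ \o' diag P Y).
    { rewrite <- nabla_eta, <- !comp_assoc. unfold diag.
      rewrite pair_comp, pmap_pair, !comp_id_l, !comp_id_r. reflexivity. }
    rewrite <- diag_comp, comp_assoc.
    rewrite (thunkable_comp f (nabla M Y Y \o' diag P (T M Y)) Hf).
    rewrite nabla_diag_eta. apply kcomp_eta_l.
  - rewrite (hom_one_eq P (bang P X) (bang P (T M Y) \o' f)), comp_assoc.
    rewrite (thunkable_comp f (eta M (one P) \o' bang P (T M Y)) Hf).
    rewrite <- comp_assoc, (hom_one_eq P (bang P (T M Y) \o' eta M Y) (bang P Y)).
    symmetry. apply kcomp_eta_l.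
Qed.

Lemma eta_thunkable {Y : C} : thunkable (eta M Y).
Proof. symmetry. apply eta_nat. Qed.

Lemma samp_diagn {X : C} (n : nat) :
  samp M X n = ktpow (force M X) n \o' diagn (T M X) n.
Proof. apply kcomp_eta_r. Qed.

Lemma samp_deterministic {X Y : C} (f : hom X (T M Y)) (n : nat) :
  deterministic f -> samp M Y n \o' f = Tmap M (diagn Y n) \o' f.
Proof.
  rewrite samp_diagn. intros Hf. pose proof Hf as [Hcopy Hdel]%deterministicE.
  induction n as [|n IH]; simpl; unfold kid, ktensor, force in *.
  - rewrite Hdel, <- comp_assoc. f_equal. apply hom_one_eq.
  - rewrite <- comp_assoc in IH.
    rewrite <- !comp_assoc, pair_comp, pmap_pair, !comp_id_l, IH.
    replace (pair P f (Tmap M (diagn (P:=P) Y n) \o' f))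
      with (pmap P (Tmap M (idm Y)) (Tmap M (diagn (P:=P) Y n)) \o' pair P f f)
      by (rewrite pmap_pair, Tmap_id, comp_id_l; reflexivity).
    rewrite comp_assoc, nabla_nat.
    rewrite <- comp_assoc, Hcopy, comp_assoc, <- Tmap_comp.
    unfold diag. rewrite pmap_pair, !comp_id_l, comp_id_r. reflexivity.
Qed.

Lemma samp_eta {Y : C} (n : nat) :
  samp M Y n \o' eta M Y = eta M (pw Y n) \o' diagn Y n.
Proof.
  rewrite samp_deterministic, eta_nat; [reflexivity|].
  apply thunkable_deterministic, eta_thunkable.
Qed.

Lemma deterministic_thunkable {X Y : C} (f : hom X (T M Y)) :
  observational M -> deterministic f -> thunkable f.
Proof.
  intros Hobs Hf. apply Hobs. intros n.
  rewrite kcomp_eta_r, kcomp_Tmap_r, samp_eta, kcomp_eta_l.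
  apply samp_deterministic, Hf.
Qed.

End Kleisli.

Theorem corollary7p2 (C : Category) (P : Cartesian C) (M : CommMonad P)
  (Hobs : observational M)
  (D : C -> C) (theta : forall Y : C, hom (D Y) (T M Y))
  (Heq : forall Y : C, is_equalizer (theta Y) (eta M (T M Y)) (Tmap M (eta M Y))) :
  forall X Y : C,
    (* composition with theta_Y is injective ... *)
    (forall h1 h2 : hom X (D Y), theta Y \o' h1 = theta Y \o' h2 -> h1 = h2) /\
    (* ... and its image is exactly the deterministic Kleisli morphisms X ~> Y *)
    (forall f : hom X (T M Y), deterministic (M:=M) f <-> exists h : hom X (D Y), theta Y \o' h = f).
Proof.
  intros X Y. split.
  - apply (equalizer_mono (Heq Y)).
  - intros f. split.
    + intros Hdet. apply (equalizer_factorsP (Heq Y)).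
      apply deterministic_thunkable; [exact Hobs | exact Hdet].
    + intros Hfac. apply thunkable_deterministic.
      apply (equalizer_factorsP (Heq Y)), Hfac.
Qed.
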